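(* Let $G=(V,E)$ be a non-separable graph with $|V|\ge 3$ and let $x\in V$ with $d(x)\le 3$. If $G-e$ is non-separable for every edge $e$ incident with $x$, then $G/e'$ is non-separable for every edge $e'$ incident with $x$.
   Context: Graphs are finite, undirected, possibly with loops and parallel edges; $d(x)$ counts each loop at $x$ twice. A graph is non-separable if it is connected, has no cut-vertex, and either has no loops or has exactly one vertex and one edge. $G/e$ denotes contraction of the edge $e$. *)

From mathcomp Require Import all_boot.
Set Implicit Arguments. Unset Strict Implicit. Unset Printing Implicit Defensive.

(* A multigraph whose vertices are drawn from a finType V and edges from a
   finType E; each edge has an (unordered, represented as a pair) set of
   two endpoints; a loop has both endpoints equal. *)
Record mgraph (V E : finType) := MGraph {
  verts : {set V};
  edges : {set E};
  ends  : E -> V * V }.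

Section Graphs.
Variables V E : finType.
Implicit Types (G : mgraph V E) (x y : V) (e : E).

Definition wf_graph G :=
  forall e, e \in edges G -> ((ends G e).1 \in verts G) && ((ends G e).2 \in verts G).

Definition incident G x e := ((ends G e).1 == x) || ((ends G e).2 == x).

Definition is_loop G e := (ends G e).1 == (ends G e).2.

(* degree: each loop at x counted twice *)
Definition deg G x : nat :=
  \sum_(e in edges G) (((ends G e).1 == x) + ((ends G e).2 == x)).

Definition adj_in G (S : {set V}) : rel V := fun x y =>
  [&& x \in S, y \in S &
      [exists e in edges G,
        ((ends G e == (x, y)) || (ends G e == (y, x)))]].

Definition connected G :=
  (verts G != set0) /\
  forall x y, x \in verts G -> y \in verts G -> connect (adj_in G (verts G)) x y.

(* v is a cut-vertex: deleting v increases the number of components, i.e.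
   two other vertices joined in G are no longer joined in G - v *)
Definition cut_vertex G v :=
  v \in verts G /\
  exists x y, [/\ x \in verts G :\ v, y \in verts G :\ v,
     connect (adj_in G (verts G)) x y &
     ~~ connect (adj_in G (verts G :\ v)) x y].

Definition loopless G := forall e, e \in edges G -> ~~ is_loop G e.

Definition nonseparable G :=
  [/\ connected G, (forall v, ~ cut_vertex G v) &
      (loopless G \/ (#|verts G| = 1 /\ #|edges G| = 1))].

Definition delete_edge G e : mgraph V E :=
  MGraph (verts G) (edges G :\ e) (ends G).

(* G / e : for a non-loop e = uw, identify w into u and remove e;
   contracting a loop is deleting it *)
Definition contract_edge G e : mgraph V E :=
  let u := (ends G e).1 in
  let w := (ends G e).2 in
  if u == w then delete_edge G e else
  let m z := if z == w then u else z in
  MGraph (verts G :\ w) (edges G :\ e)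
         (fun f => (m (ends G f).1, m (ends G f).2)).

End Graphs.

From mathcomp Require Import all_boot zify.

(* Let e = xa.  Since G - e is non-separable, x has two more edges f1, f2 with
   distinct far ends, and d(x) <= 3 makes e, f1, f2 all the edges at x.
   Neither f1 nor f2 ends in a: otherwise every edge of G - f2 (resp. G - f1)
   at x would lead to a, which is impossible in a non-separable graph with at
   least three vertices.  Hence e has no parallel edge and G/e stays loopless.
   A vertex of G/e other than the merged one is a cut vertex only if it was
   one of G.  Removing the merged vertex leaves G - x - a, which is connected:
   in G - f1 - a, connected by non-separability of G - f1, the vertex x is a
   leaf (its only edge is f2), so deleting it disconnects nothing. *)

Set Implicit Arguments. Unset Strict Implicit. Unset Printing Implicit Defensive.

Lemma connect_homo (T T' : finType) (r : rel T) (r' : rel T') (f : T -> T') :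
  (forall y z, r y z -> connect r' (f y) (f z)) ->
  forall p q, connect r p q -> connect r' (f p) (f q).
Proof.
move=> fr p q /connectP[s]; elim: s p => [|z s IH] p /=; first by move=> _ ->.
by case/andP=> rpz ps lq; apply: connect_trans (fr _ _ rpz) (IH _ ps lq).
Qed.

Section Multigraphs.
Variables V E : finType.
Implicit Types (G H : mgraph V E) (x y z a : V) (e f g : E) (S : {set V}).

Definition joins G e x y := (ends G e == (x, y)) || (ends G e == (y, x)).

Definition other_end G x e :=
  if (ends G e).1 == x then (ends G e).2 else (ends G e).1.

Definition incident_edges G x := [set e in edges G | incident G x e].

Lemma joins_sym G e x y : joins G e x y = joins G e y x.
Proof. by rewrite /joins orbC. Qed.

Lemma joins_incident G e x y :
  joins G e x y -> incident G x e /\ other_end G x e = y.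
Proof.
rewrite /joins /incident /other_end; case: (ends G e) => p q /=.
by case/orP=> /eqP[-> ->]; rewrite eqxx ?orbT; split=> //; case: eqP.
Qed.

Lemma incident_joins G x e : incident G x e -> joins G e x (other_end G x e).
Proof.
rewrite /incident /joins /other_end; case: (ends G e) => p q /=.
by case: (eqVneq p x) => [->|_] /=; [rewrite eqxx | move/eqP->; rewrite eqxx orbT].
Qed.

Lemma joins_endsE G e g x a :
  joins G e x a -> joins G g (ends G e).1 (ends G e).2 = joins G g x a.
Proof. by case/orP=> /eqP->; rewrite // joins_sym. Qed.

Lemma adj_in_sym G S : symmetric (adj_in G S).
Proof.
move=> y z; rewrite /adj_in andbCA; do 2 congr andb.
by apply: eq_existsb => e; rewrite orbC.
Qed.

Lemma adj_in_neq G S y z : loopless G -> adj_in G S y z -> y != z.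
Proof.
move=> llG /and3P[_ _ /existsP[g /andP[gE hg]]]; move: (llG g gE).
rewrite /is_loop; apply: contraNneq => yz; subst z.
by case/orP: hg => /eqP->.
Qed.

Lemma connect_delete_edge G f S :
  subrel (connect (adj_in (delete_edge G f) S)) (connect (adj_in G S)).
Proof.
apply: connect_sub => y z /and3P[yS zS /existsP[g /andP[/setD1P[_ gE] hg]]].
by apply: connect1; rewrite /adj_in yS zS; apply/existsP; exists g; rewrite gE.
Qed.

Lemma connect_first_edge G S x y :
  loopless G -> connect (adj_in G S) x y -> x != y ->
  exists2 f, f \in incident_edges G x &
    other_end G x f \in S /\ other_end G x f != x.
Proof.
move=> llG /connectP[[|t s] /=]; first by move=> _ ->; rewrite eqxx.
case/andP=> xt _ _ _; have xt' := adj_in_neq llG xt.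
case/and3P: xt => _ tS /existsP[f /andP[fE /joins_incident[xf ot]]].
by exists f; rewrite ?inE ?fE // ot eq_sym.
Qed.

(* Mapping [x] to its only neighbour [c] turns walks into walks avoiding [x]. *)
Lemma connect_setD1_leaf H S x c p q :
  (forall y, adj_in H S x y -> y = c) -> p != x -> q != x ->
  connect (adj_in H S) p q -> connect (adj_in H (S :\ x)) p q.
Proof.
move=> leaf px qx pq; pose r y := if y == x then c else y.
have rid y : y != x -> r y = y by rewrite /r => /negbTE->.
rewrite -(rid p px) -(rid q qx); apply: connect_homo pq => y z yz.
case: (eqVneq y x) => [Ey|yx].
  by subst y; rewrite /r eqxx (leaf z yz) if_same; apply: connect0.
case: (eqVneq z x) => [Ez|zx].
  by subst z; rewrite adj_in_sym in yz; rewrite /r eqxx (leaf y yz) if_same.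
case/and3P: yz => yS zS yz; rewrite !rid //.
by apply: connect1; rewrite /adj_in !in_setD1 yx zx yS zS.
Qed.

Lemma nonseparable_loopless G : nonseparable G -> 3 <= #|verts G| -> loopless G.
Proof. by case=> _ _ [//|[-> _]]. Qed.

Lemma connect_avoid G v p q :
  nonseparable G -> v \in verts G -> p \in verts G :\ v -> q \in verts G :\ v ->
  connect (adj_in G (verts G :\ v)) p q.
Proof.
case=> [[_ conG] no_cut _] vV pV qV; apply/negPn/negP => npq.
apply: (no_cut v); split=> //; exists p, q; split=> //.
by apply: conG; [case/setD1P: pV | case/setD1P: qV].
Qed.

Lemma two_neighbours G x :
  nonseparable G -> 3 <= #|verts G| -> x \in verts G ->
  exists f1 f2, [/\ f1 \in incident_edges G x, f2 \in incident_edges G x &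
                    other_end G x f1 != other_end G x f2].
Proof.
move=> nsG h3 xV; have llG := nonseparable_loopless nsG h3.
have [[_ conG] _ _] := nsG.
have : 0 < #|verts G :\ x| by move: h3; rewrite (cardsD1 x) xV; lia.
case/card_gt0P => y /setD1P[yx yV].
have xy : x != y by rewrite eq_sym.
have [f1 xf1 [t1V t1x]] := connect_first_edge llG (conG x y xV yV) xy.
set t := other_end G x f1 in t1V t1x *.
have : 0 < #|(verts G :\ x) :\ t|.
  by move: h3; rewrite (cardsD1 x) xV (cardsD1 t (verts G :\ x)) in_setD1 t1x t1V; lia.
case/card_gt0P => z /setD1P[zt /setD1P[zx zV]].
have xtV : x \in verts G :\ t by rewrite in_setD1 eq_sym t1x xV.
have ztV : z \in verts G :\ t by rewrite in_setD1 zt zV.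
have xz : x != z by rewrite eq_sym.
have [f2 xf2 [/setD1P[t2t _] _]] := connect_first_edge llG (connect_avoid nsG t1V xtV ztV) xz.
by exists f1, f2; split; rewrite // eq_sym.
Qed.

Lemma card_incident_edges G x : #|incident_edges G x| <= deg G x.
Proof.
rewrite -sum1_card (eq_bigl (fun e => (e \in edges G) && incident G x e)) => [|e].
  rewrite big_mkcondr /deg leq_sum // => e _; rewrite /incident.
  by case: (_.1 == x); case: (_.2 == x).
by rewrite inE.
Qed.

Lemma incident_edges_eq3 G x e f g :
  deg G x <= 3 -> e \in incident_edges G x -> f \in incident_edges G x ->
  g \in incident_edges G x -> e != f -> e != g -> f != g ->
  incident_edges G x = [set e; f; g].
Proof.
move=> dx eI fI gI ef eg fg; apply/eqP; rewrite eq_sym eqEcard.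
apply/andP; split.
  by apply/subsetP => h; rewrite !in_setU !in_set1 => /orP[/orP[]|]/eqP->.
rewrite -setUA cardsU1 cards2 !inE negb_or ef eg fg.
exact: leq_trans (card_incident_edges G x) dx.
Qed.

Lemma incident_edge_avoiding G x a :
  nonseparable G -> 3 <= #|verts G| -> x \in verts G ->
  exists2 f, f \in incident_edges G x & other_end G x f != a.
Proof.
move=> nsG h3 xV; have [f1 [f2 [xf1 xf2 o12]]] := two_neighbours nsG h3 xV.
case: (eqVneq (other_end G x f1) a) => [o1a|]; last by exists f1.
by exists f2; rewrite // -o1a eq_sym.
Qed.

Lemma other_end_third_edge G x e f g a :
  3 <= #|verts G| -> x \in verts G -> incident_edges G x = [set e; f; g] ->
  other_end G x e = a -> nonseparable (delete_edge G g) -> other_end G x f != a.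
Proof.
move=> h3 xV Ix oe nsg; have [h] := incident_edge_avoiding a nsg h3 xV.
rewrite inE => /andP[/setD1P[hg hE] xh] oh.
have : h \in incident_edges G x by rewrite inE hE; apply: xh.
rewrite Ix !inE (negbTE hg) orbF => /orP[]/eqP Eh; subst h => //.
by rewrite -oe eqxx in oh.
Qed.

Lemma adj_in_delete_third G x e f g a :
  incident_edges G x = [set e; f; g] -> joins G e x a ->
  forall y, adj_in (delete_edge G f) (verts G :\ a) x y -> y = other_end G x g.
Proof.
move=> Ix jxa y /and3P[_ /setD1P[ya _] /existsP[h /andP[/setD1P[hf hE] xhy]]].
have [xh yh] := joins_incident (G := G) xhy.
have : h \in incident_edges G x by rewrite inE hE xh.
rewrite Ix !inE (negbTE hf) orbF => /orP[]/eqP Eh; subst h; last by rewrite yh.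
by have [_ ae] := joins_incident jxa; rewrite -yh ae eqxx in ya.
Qed.

Lemma incident_edges3_no_parallel G x e f g a :
  3 <= #|verts G| -> x \in verts G -> incident_edges G x = [set e; f; g] ->
  joins G e x a -> nonseparable (delete_edge G f) -> nonseparable (delete_edge G g) ->
  forall h, h \in edges G :\ e -> ~~ joins G h x a.
Proof.
move=> h3 xV Ix jxa nsf nsg h /setD1P[he hE]; apply/negP => /joins_incident[xh oh].
have [_ oe] := joins_incident jxa.
have Ix' : incident_edges G x = [set e; g; f].
  by rewrite Ix; apply/setP => k; rewrite !inE orbAC.
have : h \in incident_edges G x by rewrite inE hE xh.
rewrite Ix !inE (negbTE he) /= => /orP[]/eqP Eh; subst h.
  by move: (other_end_third_edge h3 xV Ix oe nsg); rewrite oh eqxx.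
by move: (other_end_third_edge h3 xV Ix' oe nsf); rewrite oh eqxx.
Qed.

Section Contraction.
Variables (G : mgraph V E) (e : E).
Hypotheses (wfG : wf_graph G) (eE : e \in edges G) (e_nonloop : ~~ is_loop G e).
Local Notation u := (ends G e).1.
Local Notation w := (ends G e).2.

Definition merge z := if z == w then u else z.

Lemma contract_edgeE : contract_edge G e =
  MGraph (verts G :\ w) (edges G :\ e) (fun f => (merge (ends G f).1, merge (ends G f).2)).
Proof. by move: e_nonloop; rewrite /contract_edge /is_loop => /negbTE->. Qed.

Lemma verts_contract : verts (contract_edge G e) = verts G :\ w.
Proof. by rewrite contract_edgeE. Qed.

Lemma merge_id z : z != w -> merge z = z.
Proof. by rewrite /merge => /negbTE->. Qed.

Lemma connect_contract (A B : {set V}) : {in A, forall y, merge y \in B} ->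
  forall y z, connect (adj_in G A) y z ->
  connect (adj_in (contract_edge G e) B) (merge y) (merge z).
Proof.
move=> AB; apply: connect_homo => y z /and3P[yA zA /existsP[g /andP[gE hg]]].
case: (eqVneq g e) => [Eg|ge].
  subst g; apply: eq_connect0; rewrite /merge.
  by case/orP: hg => /eqP->; rewrite eqxx //=; case: ifP.
rewrite contract_edgeE; apply: connect1; rewrite /adj_in /= !AB //.
apply/existsP; exists g; rewrite in_setD1 ge gE /=.
by case/orP: hg => /eqP->; rewrite eqxx ?orbT.
Qed.

Lemma merge_in_verts S y : u \in S -> y \in S -> merge y \in S :\ w.
Proof.
move=> uS yS; rewrite /merge; case: (eqVneq y w) => [_|yw].
  by rewrite in_setD1 e_nonloop.
by rewrite in_setD1 yw.
Qed.

Lemma contract_connected : connected G -> connected (contract_edge G e).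
Proof.
move=> [_ conG]; have /andP[uV _] := wfG eE.
rewrite /connected verts_contract; split=> [|p q /setD1P[pw pV] /setD1P[qw qV]].
  by apply/set0Pn; exists u; rewrite in_setD1 e_nonloop.
rewrite -(merge_id pw) -(merge_id qw).
by apply: connect_contract (conG p q pV qV) => y; apply: merge_in_verts.
Qed.

Lemma contract_not_cut v : nonseparable G -> v != u ->
  ~ cut_vertex (contract_edge G e) v.
Proof.
move=> nsG vu [vV [p [q [pV qV _ /negP]]]]; apply.
move: vV pV qV; rewrite verts_contract !in_setD1.
move=> /andP[vw vG] /and3P[pv pw pG] /and3P[qv qw qG].
have /andP[uV _] := wfG eE.
rewrite -(merge_id pw) -(merge_id qw).
apply: connect_contract (connect_avoid nsG vG _ _) => [y /setD1P[yv yG]||].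
- rewrite in_setD1 merge_in_verts // andbT /merge.
  by case: ifP => _; rewrite // eq_sym.
- by rewrite in_setD1 pv pG.
- by rewrite in_setD1 qv qG.
Qed.

Lemma contract_loopless : loopless G ->
  (forall g, g \in edges G :\ e -> ~~ joins G g u w) -> loopless (contract_edge G e).
Proof.
move=> llG no_par g; rewrite contract_edgeE /is_loop /= => /setD1P[ge gE].
move: (llG g gE) (no_par g); rewrite in_setD1 ge gE /is_loop /joins /merge.
case: (ends G g) => y z /=.
case: (eqVneq y w) => [->|yw]; case: (eqVneq z w) => [->|zw] //= _ /(_ isT).
- by apply: contra => /eqP->; rewrite eqxx orbT.
- by apply: contra => /eqP->; rewrite eqxx.
Qed.

Lemma contract_merged_not_cut x a f c :
  joins G e x a -> nonseparable (delete_edge G f) ->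
  (forall y, adj_in (delete_edge G f) (verts G :\ a) x y -> y = c) ->
  ~ cut_vertex (contract_edge G e) u.
Proof.
move=> jxa nsf leaf [_ [p [q [pV qV _ /negP]]]]; apply.
have aV : a \in verts G by case/orP: jxa (wfG eE) => /eqP-> /andP[].
have off_xa y : ((y != u) && (y != w)) = ((y != x) && (y != a)).
  by case/orP: jxa => /eqP-> //=; rewrite andbC.
move: pV qV; rewrite verts_contract !in_setD1 => /and3P[pu pw pG] /and3P[qu qw qG].
have /andP[px pa] : (p != x) && (p != a) by rewrite -off_xa pu pw.
have /andP[qx qa] : (q != x) && (q != a) by rewrite -off_xa qu qw.
have pA : p \in verts G :\ a by rewrite in_setD1 pa pG.
have qA : q \in verts G :\ a by rewrite in_setD1 qa qG.
move/(connect_setD1_leaf leaf px qx)/connect_delete_edge: (connect_avoid nsf aV pA qA).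
move=> pq; rewrite -(merge_id pw) -(merge_id qw).
apply: connect_contract pq => y; rewrite !in_setD1 => /and3P[yx ya yG].
have /andP[yu yw] : (y != u) && (y != w) by rewrite off_xa yx ya.
by rewrite merge_id // yu yw yG.
Qed.
End Contraction.
End Multigraphs.

Theorem lemma4p1 (V E : finType) (G : mgraph V E) (x : V) :
  wf_graph G -> nonseparable G -> 3 <= #|verts G| ->
  x \in verts G -> deg G x <= 3 ->
  (forall e, e \in edges G -> incident G x e -> nonseparable (delete_edge G e)) ->
  forall e', e' \in edges G -> incident G x e' -> nonseparable (contract_edge G e').
Proof.
move=> wfG nsG h3 xV degx nsdel e eE xe.
have llG := nonseparable_loopless nsG h3.
have e_nonloop := llG e eE.
have jxa := incident_joins xe; set a := other_end G x e in jxa.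
have [f1 [f2 []]] := two_neighbours (nsdel e eE xe) h3 xV.
rewrite !inE => /andP[/andP[f1e f1E] xf1] /andP[/andP[f2e f2E] xf2] o12.
have Ix : incident_edges G x = [set e; f1; f2].
  apply: incident_edges_eq3; rewrite ?inE ?eE ?f1E ?f2E 1?eq_sym //.
  by apply: contraNneq o12 => ->.
have no_par := incident_edges3_no_parallel h3 xV Ix jxa (nsdel f1 f1E xf1) (nsdel f2 f2E xf2).
split.
- by apply: contract_connected => //; case: nsG.
- move=> v; case: (eqVneq v (ends G e).1) => [->|vu].
    exact: contract_merged_not_cut jxa (nsdel f1 f1E xf1) (adj_in_delete_third Ix jxa).
  exact: contract_not_cut.
- left; apply: contract_loopless e_nonloop llG _ => g.
  by rewrite (joins_endsE _ jxa); apply: no_par.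
Qed.
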